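(* Let $\boldsymbol{H}$ be a self-adjoint operator on $L^{2}(\mathbb{Z}_{p})$ defined on $\mathcal{D}(\mathbb{Z}_{p})$, with unitary group $e^{-i\boldsymbol{H}t}$. Let $\mathcal{N}\subset\mathbb{Z}_{p}$ have measure zero and $\{\mathcal{K}_{j}\}_{j\in\mathbb{J}}$ be pairwise disjoint open compact subsets with $\mathbb{Z}_{p}\smallsetminus\mathcal{N}=\bigsqcup_{j\in\mathbb{J}}\mathcal{K}_{j}$, where $\mathbb{J}$ is a finite set. Put $e_{v}=c_{v}1_{\mathcal{K}_{v}}$ with $\|e_v\|_2=1$, and assume $\mathcal{H}_{\mathbb{J}}:=\mathrm{Span}\{e_j;\ j\in\mathbb{J}\}$ is a Hilbert subspace of $L^2(\mathbb{Z}_p)$. For $r,v\in\mathbb{J}$ set $\pi_{r,v}(t)=|\langle e_{r},e^{-i\boldsymbol{H}t}e_{v}\rangle|^{2}$; introduce an extra state $\infty$ and set $\pi_{\infty,v}(t)=1-\sum_{r\in\mathbb{J}}\pi_{r,v}(t)$ for $v\in\mathbb{J}$, $\pi_{s,\infty}(t)=0$ for $s\in\mathbb{J}$ and $\pi_{\infty,\infty}(t)=1$, for all $t\ge0$. Then $[\pi_{s,r}(t)]_{s,r\in\mathbb{J}\cup\{\infty\}}$ is the transition matrix of a continuous-time quantum Markov chain with state space $\mathbb{J}\cup\{\infty\}$.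
   Context: $p$ is a fixed prime; $\mathbb{Z}_p$ carries the Haar measure with $\int_{\mathbb{Z}_p}dx=1$; $\langle f,g\rangle=\int f\overline g\,dx$. By the transition matrix of a continuous-time quantum Markov chain on a state space $S$ the paper means a family $[\pi_{s,r}(t)]_{s,r\in S}$, $t\ge0$, with $\pi_{s,r}(t)\in[0,1]$ and $\sum_{s\in S}\pi_{s,r}(t)=1$ for all $r\in S$, $t\ge 0$, interpreted as the probability of being in state $s$ at time $t$ having started in $r$. *)

From HB Require Import structures.
From mathcomp Require Import all_boot all_order all_algebra.
From mathcomp Require Import all_classical all_reals all_analysis.
From mathcomp Require Import complex.

Set Implicit Arguments.
Unset Strict Implicit.
Unset Printing Implicit Defensive.

Import Order.TTheory GRing.Theory Num.Theory.
Import numFieldNormedType.Exports.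

Local Open Scope classical_set_scope.
Local Open Scope ring_scope.

(* The p-adic integers Z_p, as sequences of p-adic digits                   *)
(*   x = a_0 + a_1 p + a_2 p^2 + ...,   a_k in {0,...,p-1},                 *)
(* (this is exactly the p-adic topology: the basic open sets are the balls  *)
(*  a + p^n Z_p = "first n digits prescribed").                             *)
(* 'Z_p is {0,...,p-1} as soon as p >= 2 (p is prime in the statement).     *)
Definition Zpad (p : nat) : Type :=
  prod_topology (fun _ : nat => discrete_topology 'Z_p).

Definition I01 (R : realType) : set R := `[(0 : R), 1[%classic.

(* p-adic digit map [0,1) -> Z_p : r = sum_k a_k p^{-k-1}  |->  (a_k)_k.   *)
Definition pdigits (R : realType) (p : nat) (r : R) : Zpad p :=
  fun k => inZp `|Num.floor (r * (p%:R) ^+ k.+1)|%N.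

(* Normalized Haar measure on Z_p: it is the push-forward of the Lebesgue
   measure on [0,1) under the digit map (the digits of a uniform point of
   [0,1) are i.i.d. uniform on {0,..,p-1}).  Accordingly:                   *)

Definition Zp_null (R : realType) (p : nat) (N : set (Zpad p)) : Prop :=
  (@lebesgue_measure R).-negligible
     [set r : R | (@I01 R) r /\ N (pdigits p r)].

Definition Zp_ae_eq (R : realType) (p : nat) (f g : Zpad p -> R[i]) : Prop :=
  Zp_null R [set x | f x <> g x].

(* Square-integrable complex functions on Z_p: the elements of L^2(Z_p)
   (L^2(Z_p) itself being the quotient by Zp_ae_eq).                        *)
Definition Zp_L2 (R : realType) (p : nat) (f : Zpad p -> R[i]) : Prop :=
  [/\ measurable_fun (@I01 R) (fun r : R => complex.Re (f (pdigits p r))),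
      measurable_fun (@I01 R) (fun r : R => complex.Im (f (pdigits p r))) &
      (\int[@lebesgue_measure R]_(r in (@I01 R))
          ((ComplexField.Normc.normc (f (pdigits p r))) ^+ 2)%:E < +oo)%E].

Definition Zp_ip (R : realType) (p : nat) (f g : Zpad p -> R[i]) : R[i] :=
  let h := fun r : R => f (pdigits p r) * Num.conj (g (pdigits p r)) in
  Complex (Rintegral (@lebesgue_measure R) (@I01 R)
                     (fun r => complex.Re (h r)))
          (Rintegral (@lebesgue_measure R) (@I01 R)
                     (fun r => complex.Im (h r))).

Definition Zp_norm2 (R : realType) (p : nat) (f : Zpad p -> R[i]) : R :=
  Num.sqrt (complex.Re (Zp_ip f f)).

(* D(Z_p): the Bruhat-Schwartz test functions = locally constant functions
   (Z_p is compact, so compact support is automatic).                       *)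
Definition Zp_test (R : realType) (p : nat) (f : Zpad p -> R[i]) : Prop :=
  forall x : Zpad p, \forall y \near x, f y = f x.

(* U : R -> (functions on Z_p) is a strongly continuous one-parameter group
   of unitary operators of L^2(Z_p) (acting on representatives).             *)
Definition unitary_group (R : realType) (p : nat)
    (U : R -> (Zpad p -> R[i]) -> (Zpad p -> R[i])) : Prop :=
  [/\ (forall t f, Zp_L2 f -> Zp_L2 (U t f)),
      (forall t f g, Zp_L2 f -> Zp_L2 g -> Zp_ae_eq f g ->
                     Zp_ae_eq (U t f) (U t g)),
      (forall t (a : R[i]) f g, Zp_L2 f -> Zp_L2 g ->
         Zp_ae_eq (U t (fun x => a * f x + g x))
                  (fun x => a * U t f x + U t g x)),
      (forall t f g, Zp_L2 f -> Zp_L2 g -> Zp_ip (U t f) (U t g) = Zp_ip f g) &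
      [/\ (forall f, Zp_L2 f -> Zp_ae_eq (U 0 f) f),
      (forall s t f, Zp_L2 f -> Zp_ae_eq (U (s + t) f) (U s (U t f))) &
      (forall f t0, Zp_L2 f ->
         (fun t => Zp_norm2 (fun x => U t f x - U t0 f x)) @ t0 --> (0 : R))]].

(* H is a (essentially) self-adjoint operator of L^2(Z_p) defined on D(Z_p):
   linear and symmetric on D(Z_p), with Ran(H + i) and Ran(H - i) dense. *)
Definition selfadjoint_on_test (R : realType) (p : nat)
    (H : (Zpad p -> R[i]) -> (Zpad p -> R[i])) : Prop :=
  [/\ (forall f, Zp_test f -> Zp_L2 (H f)),
      (forall (a : R[i]) f g, Zp_test f -> Zp_test g ->
         Zp_ae_eq (H (fun x => a * f x + g x)) (fun x => a * H f x + H g x)),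
      (forall f g, Zp_test f -> Zp_test g -> Zp_ip (H f) g = Zp_ip f (H g)) &
      (forall (s : R[i]) g (eps : R), (s = 'i%C \/ s = - 'i%C) ->
         Zp_L2 g -> 0 < eps ->
         exists f, Zp_test f /\
           Zp_norm2 (fun x => H f x + s * f x - g x) < eps)].

(* U(t) = e^{-iHt}: U is a unitary group whose generator is -iH on D(Z_p):
   (U(t) f - f)/t -> -i H f in L^2 as t -> 0, for every f in D(Z_p).        *)
Definition is_exp_group (R : realType) (p : nat)
    (H : (Zpad p -> R[i]) -> (Zpad p -> R[i]))
    (U : R -> (Zpad p -> R[i]) -> (Zpad p -> R[i])) : Prop :=
  unitary_group U /\
  forall f, Zp_test f ->
    (fun t : R => Zp_norm2 (fun x => (U t f x - f x) / Complex t 0 + 'i%C * H f x))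
      @ 0^' --> (0 : R).

Definition Zp_ind (R : realType) (p : nat) (A : set (Zpad p)) : Zpad p -> R[i] :=
  fun x => Complex (\1_A x : R) 0.

(* Extension of a J x J family to the state space J u {oo} = option J
   (None = oo), as in the statement.                                         *)
Definition ext_infty (R : realType) (J : finType) (pi : R -> J -> J -> R)
    (t : R) (s r : option J) : R :=
  match s, r with
  | Some s, Some r => pi t s r
  | None, Some r => 1 - \sum_(j : J) pi t j r
  | Some _, None => 0
  | None, None => 1
  end.

Definition transition_matrix (R : realType) (S : finType)
    (P : R -> S -> S -> R) : Prop :=
  forall t : R, 0 <= t ->
    (forall s r, 0 <= P t s r <= 1) /\ (forall r, \sum_(s : S) P t s r = 1).

From HB Require Import structures.
From mathcomp Require Import all_boot all_order all_algebra.
From mathcomp Require Import all_classical all_reals all_analysis.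
From mathcomp Require Import complex.
From mathcomp Require Import measurable_realfun.
From mathcomp Require Import ring lra.

Set Implicit Arguments.
Unset Strict Implicit.
Unset Printing Implicit Defensive.

Import Order.TTheory GRing.Theory Num.Theory.
Import numFieldNormedType.Exports.

Local Open Scope classical_set_scope.
Local Open Scope ring_scope.

(* The functions e_j = c_j 1_{K_j} have pairwise disjoint supports and norm 1,
   so Cauchy-Schwarz on K_j gives |<e_j, g>|^2 <= int_{K_j} |g|^2, and summing
   over j yields Bessel's inequality  sum_j |<e_j, g>|^2 <= ||g||^2.  For
   g = e^{-iHt} e_v, of norm 1 by unitarity, this says that every column of
   [pi_{r,v}(t)] is substochastic; the missing mass goes to the absorbing state
   oo, which makes every column of the extended matrix sum to 1. *)

Lemma indic01 {R : numDomainType} {T : Type} (A : set T) (x : T) :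
  0 <= (\1_A x : R) <= 1.
Proof. by rewrite indicE; case: (_ \in _); rewrite ?lexx ?ler01. Qed.

Section weighted_integrals.
Context d (T : measurableType d) (R : realType) (mu : {measure set T -> \bar R}).
Variable D : set T.
Hypothesis mD : measurable D.

Lemma integrableD_EFin (f g : T -> R) :
  mu.-integrable D (EFin \o f) -> mu.-integrable D (EFin \o g) ->
  mu.-integrable D (EFin \o (fun x => f x + g x)).
Proof. exact: integrableD. Qed.

Lemma integrableB_EFin (f g : T -> R) :
  mu.-integrable D (EFin \o f) -> mu.-integrable D (EFin \o g) ->
  mu.-integrable D (EFin \o (fun x => f x - g x)).
Proof. exact: integrableB. Qed.

Lemma integrableZl_EFin (k : R) (f : T -> R) :
  mu.-integrable D (EFin \o f) -> mu.-integrable D (EFin \o (fun x => k * f x)).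
Proof. exact: integrableZl. Qed.

Lemma integrable_sum_EFin (I : Type) (s : seq I) (f : I -> T -> R) :
  (forall i, mu.-integrable D (EFin \o f i)) ->
  mu.-integrable D (EFin \o (fun x => \sum_(i <- s) f i x)).
Proof.
move=> fi; apply: eq_integrable (integrable_sum mD s (fun i _ => fi i)) => //.
by move=> x _ /=; rewrite sumEFin.
Qed.

Lemma Rintegral_sum (I : Type) (s : seq I) (f : I -> T -> R) :
  (forall i, mu.-integrable D (EFin \o f i)) ->
  \int[mu]_(x in D) \sum_(i <- s) f i x = \sum_(i <- s) \int[mu]_(x in D) f i x.
Proof.
move=> fi; elim: s => [|i s IH].
  by under eq_Rintegral do rewrite big_nil; rewrite Rintegral_cst // mul0r big_nil.
under eq_Rintegral do rewrite big_cons.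
by rewrite RintegralD // ?IH ?big_cons //; exact: integrable_sum_EFin.
Qed.

Lemma integrable_sqr (u : T -> R) : measurable_fun D u ->
  (\int[mu]_(x in D) (u x ^+ 2)%:E < +oo)%E ->
  mu.-integrable D (EFin \o (fun x => u x ^+ 2)).
Proof.
move=> mfu fin; apply/integrableP; split.
  by apply/measurable_EFinP; exact: measurable_funX.
by under eq_integral do rewrite /= ger0_norm ?sqr_ge0 //.
Qed.

Lemma integrable_weightM (w f : T -> R) :
  measurable_fun D w -> (forall x, 0 <= w x <= 1) ->
  mu.-integrable D (EFin \o f) -> mu.-integrable D (EFin \o (fun x => w x * f x)).
Proof.
move=> mw w01 fi.
have mf : measurable_fun D f by apply/measurable_EFinP; exact: measurable_int fi.
apply: le_integrable fi => //; first by apply/measurable_EFinP; exact: measurable_funM.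
move=> x _ /=; have /andP[w0 w1] := w01 x.
by rewrite lee_fin normrM ger0_norm // ler_piMl.
Qed.

Lemma sqr_integral_lt_pinftyl (u v : T -> R) :
  measurable_fun D u -> measurable_fun D v ->
  (\int[mu]_(x in D) (u x ^+ 2 + v x ^+ 2)%:E < +oo)%E ->
  (\int[mu]_(x in D) (u x ^+ 2)%:E < +oo)%E.
Proof.
move=> mfu mv fin; apply: le_lt_trans fin; apply: ge0_le_integral => //.
- by move=> x _; rewrite lee_fin sqr_ge0.
- by apply/measurable_EFinP; exact: measurable_funX.
- by apply/measurable_EFinP; apply: measurable_funD; exact: measurable_funX.
- by move=> x _; rewrite lee_fin lerDl sqr_ge0.
Qed.

Hypothesis finD : (mu D < +oo)%E.

Lemma integrable_cst_EFin (k : R) : mu.-integrable D (EFin \o cst k).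
Proof.
apply/integrableP; split; first exact/measurable_EFinP.
by rewrite (eq_integral (cst `|k|%:E)) // integral_cst // lte_mul_pinfty.
Qed.

(* On a set of finite measure, [|u| <= 1 + u^2] makes L^2 functions integrable. *)
Lemma integrable_of_sqr (u : T -> R) : measurable_fun D u ->
  (\int[mu]_(x in D) (u x ^+ 2)%:E < +oo)%E -> mu.-integrable D (EFin \o u).
Proof.
move=> mfu fin.
have i1u2 := integrableD_EFin (integrable_cst_EFin 1) (integrable_sqr mfu fin).
apply: le_integrable i1u2 => //; first exact/measurable_EFinP.
move=> x _ /=; rewrite lee_fin [X in _ <= X]ger0_norm ?addr_ge0 ?sqr_ge0 //.
have := sqr_ge0 (`|u x| - 1); rewrite sqrrB real_normK ?num_real // expr1n mulr1.
nra.
Qed.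

Lemma weighted_Cauchy_Schwarz (w u : T -> R) :
  measurable_fun D w -> (forall x, 0 <= w x <= 1) ->
  measurable_fun D u -> (\int[mu]_(x in D) (u x ^+ 2)%:E < +oo)%E ->
  0 < \int[mu]_(x in D) w x ->
  (\int[mu]_(x in D) (w x * u x)) ^+ 2 <=
    \int[mu]_(x in D) w x * \int[mu]_(x in D) (w x * u x ^+ 2).
Proof.
move=> mw w01 mfu fin L_gt0.
set L := \int[mu]_(x in D) w x.
set S := \int[mu]_(x in D) (w x * u x).
set Q := \int[mu]_(x in D) (w x * u x ^+ 2).
have iw : mu.-integrable D (EFin \o w).
  apply: eq_integrable (integrable_weightM mw w01 (integrable_cst_EFin 1)) => //.
  by move=> x _ /=; rewrite mulr1.
have iwu := integrable_weightM mw w01 (integrable_of_sqr mfu fin).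
have iwu2 := integrable_weightM mw w01 (integrable_sqr mfu fin).
have var_ge0 : 0 <= \int[mu]_(x in D) (w x * (L * u x - S) ^+ 2).
  by apply: Rintegral_ge0 => x _; have /andP[w0 _] := w01 x; rewrite mulr_ge0 ?sqr_ge0.
have varE : \int[mu]_(x in D) (w x * (L * u x - S) ^+ 2) = L * (L * Q - S ^+ 2).
  rewrite (@eq_Rintegral _ _ _ _ _ (fun x =>
      (L ^+ 2 * (w x * u x ^+ 2) - (2 * L * S) * (w x * u x)) + S ^+ 2 * w x));
    last by move=> x _; ring.
  have i1 := integrableZl_EFin (L ^+ 2) iwu2.
  have i2 := integrableZl_EFin (2 * L * S) iwu.
  have i3 := integrableZl_EFin (S ^+ 2) iw.
  rewrite RintegralD ?RintegralB ?RintegralZl -/L -/S -/Q //; first by ring.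
  exact: integrableB_EFin.
by move: var_ge0; rewrite varE pmulr_rge0 // subr_ge0.
Qed.

End weighted_integrals.

Section complex_algebra.
Variable R : rcfType.

Lemma sqrtr_eq1 (x : R) : Num.sqrt x = 1 -> x = 1.
Proof.
have [x_lt0|x_ge0] := ltrP x 0.
  by rewrite ltr0_sqrtr // => /eqP; rewrite eq_sym oner_eq0.
by move=> sqrtx1; rewrite -(sqr_sqrtr x_ge0) sqrtx1 expr1n.
Qed.

Lemma normc_sqr (z : R[i]) :
  ComplexField.Normc.normc z ^+ 2 = complex.Re z ^+ 2 + complex.Im z ^+ 2.
Proof. by case: z => a b; rewrite /= sqr_sqrtr // addr_ge0 // sqr_ge0. Qed.

Lemma Re_mul_conj (a z : R[i]) :
  complex.Re (a * Num.conj z) = complex.Re a * complex.Re z + complex.Im a * complex.Im z.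
Proof. by case: a => ? ?; case: z => ? ? /=; ring. Qed.

Lemma Im_mul_conj (a z : R[i]) :
  complex.Im (a * Num.conj z) = complex.Im a * complex.Re z - complex.Re a * complex.Im z.
Proof. by case: a => ? ?; case: z => ? ? /=; ring. Qed.

End complex_algebra.

Section p_adic_digits.
Variables (R : realType) (p : nat).
(* [I01 R] is taken in the domain of the Lebesgue measure, whose sigma-algebra
   is a structure on [R] distinct from (though convertible to) the default one. *)
Local Notation D := (@I01 R : set (measurableTypeR R)).

Lemma measurable_I01 : measurable D.
Proof. exact: measurable_itv. Qed.

Lemma lebesgue_measure_I01 : lebesgue_measure D = 1%E.
Proof. by rewrite /I01 lebesgue_measure_itv /= lte_fin ltr01 oppr0 adde0. Qed.

Lemma lebesgue_measure_I01_lt_pinfty : (lebesgue_measure D < +oo)%E.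
Proof. by rewrite lebesgue_measure_I01 ltry. Qed.

Hypothesis p_gt0 : (0 < p)%N.

(* The [k]-th digit equals [a] exactly on the union of the intervals
   [[j / p^(k+1), (j+1) / p^(k+1))] with [j = a (mod p)]. *)
Lemma measurable_pdigits_eq (k : nat) (a : 'Z_p) :
  measurable [set r : R | D r /\ pdigits p r k = a].
Proof.
set q : R := p%:R ^+ k.+1.
have q_gt0 : 0 < q by rewrite exprn_gt0 // ltr0n.
have -> : [set r : R | D r /\ pdigits p r k = a] =
    \bigcup_(j in [set j : nat | inZp j = a :> 'Z_p])
      (D `&` [set` Interval (BLeft (j%:R / q)) (BLeft (j.+1%:R / q))]).
  apply/seteqP; split => r /=.
  - move=> [Dr <-]; have /andP[r_ge0 _] : 0 <= r < 1 by move: Dr; rewrite /I01 /= in_itv.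
    have fl_ge0 : (0 <= Num.floor (r * q))%R by rewrite floor_ge0 mulr_ge0 // ltW.
    exists `|Num.floor (r * q)|%N => //; split => //.
    rewrite /= in_itv /= ler_pdivrMr // ltr_pdivlMr //.
    have := floor_itv (r * q).
    case: (Num.floor (r * q)) fl_ge0 => // n _.
    by rewrite -[(Posz n + 1)%R]/(Posz (n + 1)%N) addn1.
  - move=> [j <-] [Dr] /=; rewrite in_itv /= ler_pdivrMr // ltr_pdivlMr // => rq_itv.
    split => //; rewrite /pdigits (@floor_def _ _ j%:Z) //.
    by rewrite -[(Posz j + 1)%R]/(Posz (j + 1)%N) addn1.
apply: bigcup_measurable => j _; apply: measurableI; first exact: measurable_I01.
exact: measurable_itv.
Qed.

Definition cylinder_nbhs (x : Zpad p) : set_system (Zpad p) :=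
  [set A | exists n : nat, forall y, (forall k, (k < n)%N -> y k = x k) -> A y].

Lemma cylinder_nbhs_filter (x : Zpad p) : Filter (cylinder_nbhs x).
Proof.
split.
- by exists 0%N.
- move=> A B [n An] [m Bm]; exists (maxn n m) => y y_x; split.
  + by apply: An => k kn; apply: y_x; rewrite leq_max kn.
  + by apply: Bm => k km; apply: y_x; rewrite leq_max km orbT.
- by move=> A B AB [n An]; exists n => y y_x; exact/AB/An.
Qed.

(* Cylinders converge to [x] in every coordinate, hence in the product topology. *)
Lemma open_cylinder (A : set (Zpad p)) (x : Zpad p) : open A -> A x ->
  exists n : nat, forall y, (forall k, (k < n)%N -> y k = x k) -> A y.
Proof.
move=> oA Ax.
have cyl_x : cylinder_nbhs x --> x.
  apply/cvg_sup; first exact: cylinder_nbhs_filter.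
  move=> k B /=; rewrite /nbhs /= => -[C [[V oV <-] Cx] CB].
  by exists k.+1 => y y_x; apply: CB; rewrite /= y_x.
exact: cyl_x (open_nbhs_nbhs (conj oA Ax)).
Qed.

Lemma measurable_pdigits_preimage (A : set (Zpad p)) : open A ->
  measurable (D `&` pdigits p @^-1` A).
Proof.
move=> oA.
have -> : D `&` pdigits p @^-1` A =
    \bigcup_(n : nat) \bigcup_(s in [set s : {ffun 'I_n -> 'Z_p} |
        forall y : Zpad p, (forall i : 'I_n, y i = s i) -> A y])
      (D `&` \bigcap_(i in [set: 'I_n]) [set r | D r /\ pdigits p r i = s i]).
  apply/seteqP; split => r /=.
  - move=> [Dr Ar]; have [n An] := open_cylinder oA Ar.
    exists n => //; exists [ffun i : 'I_n => pdigits p r i].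
      by move=> y y_r /=; apply: An => k kn; rewrite (y_r (Ordinal kn)) ffunE.
    by split => // i _; rewrite ffunE.
  - move=> [n _ [s As [Dr r_s]]]; split => //; apply: As => i.
    by have [] := r_s i I.
apply: bigcupT_measurable => n; apply: fin_bigcup_measurable; first exact: finite_finset.
move=> s _; apply: measurableI; first exact: measurable_I01.
apply: fin_bigcap_measurable; first exact: finite_finset.
by move=> i _; exact: measurable_pdigits_eq.
Qed.

End p_adic_digits.

Section Zp_square_integrable.
Variables (R : realType) (p : nat).
Local Notation D := (@I01 R : set (measurableTypeR R)).
Local Notation mu := (@lebesgue_measure R).

Lemma Zp_L2_Re_Im (g : Zpad p -> R[i]) : Zp_L2 g ->
  [/\ measurable_fun D (fun r => complex.Re (g (pdigits p r))),
      measurable_fun D (fun r => complex.Im (g (pdigits p r))),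
      (\int[mu]_(r in D) (complex.Re (g (pdigits p r)) ^+ 2)%:E < +oo)%E &
      (\int[mu]_(r in D) (complex.Im (g (pdigits p r)) ^+ 2)%:E < +oo)%E].
Proof.
move=> [mRe mIm]; under eq_integral do rewrite normc_sqr; move=> fin.
have mD := @measurable_I01 R.
split => //; first exact: (sqr_integral_lt_pinftyl mD mRe mIm fin).
move: fin; under eq_integral do rewrite addrC.
exact: (sqr_integral_lt_pinftyl mD mIm mRe).
Qed.

Lemma Re_Zp_ip_self (g : Zpad p -> R[i]) : complex.Re (Zp_ip g g) =
  \int[mu]_(r in D) (complex.Re (g (pdigits p r)) ^+ 2 + complex.Im (g (pdigits p r)) ^+ 2).
Proof. by apply: eq_Rintegral => r _; rewrite Re_mul_conj -!expr2. Qed.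

End Zp_square_integrable.

Section Zp_indicator_vector.
Variables (R : realType) (p : nat) (K : set (Zpad p)) (c : R[i]).
Local Notation D := (@I01 R : set (measurableTypeR R)).
Local Notation mu := (@lebesgue_measure R).
Local Notation e := (fun x => c * Zp_ind R K x).
Local Notation w := (\1_(pdigits p @^-1` K) : R -> R).

Lemma Re_Zp_ind_pdigits r :
  complex.Re (e (pdigits p r)) = complex.Re c * w r.
Proof. by rewrite /Zp_ind; case: c => a b /=; ring. Qed.

Lemma Im_Zp_ind_pdigits r :
  complex.Im (e (pdigits p r)) = complex.Im c * w r.
Proof. by rewrite /Zp_ind; case: c => a b /=; ring. Qed.

Lemma Zp_ip_indE (g : Zpad p -> R[i]) : Zp_ip e g =
  Complex
    (\int[mu]_(r in D) (w r * (complex.Re c * complex.Re (g (pdigits p r))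
                               + complex.Im c * complex.Im (g (pdigits p r)))))
    (\int[mu]_(r in D) (w r * (complex.Im c * complex.Re (g (pdigits p r))
                               - complex.Re c * complex.Im (g (pdigits p r))))).
Proof.
by congr Complex; apply: eq_Rintegral => r _;
  rewrite ?Re_mul_conj ?Im_mul_conj Re_Zp_ind_pdigits Im_Zp_ind_pdigits; ring.
Qed.

Hypotheses (p_gt0 : (0 < p)%N) (oK : open K).

Lemma measurable_indic_pdigits : measurable_fun D w.
Proof.
apply: (eq_measurable_fun (\1_(D `&` pdigits p @^-1` K) : R -> R)).
  by move=> r /set_mem Dr; rewrite !indicE in_setI (mem_set Dr).
by apply: measurable_indic; exact: measurable_pdigits_preimage.
Qed.

Lemma integrable_indic_pdigits : mu.-integrable D (EFin \o w).
Proof.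
have mD := @measurable_I01 R.
have := integrable_weightM mD measurable_indic_pdigits (indic01 _)
  (integrable_cst_EFin mD (lebesgue_measure_I01_lt_pinfty R) 1).
by apply: eq_integrable => // r _ /=; rewrite mulr1.
Qed.

Lemma Zp_L2_ind : Zp_L2 e.
Proof.
have mw := measurable_indic_pdigits.
split.
- apply: (eq_measurable_fun (fun r => complex.Re c * w r)); last exact: measurable_funM.
  by move=> r _; rewrite Re_Zp_ind_pdigits.
- apply: (eq_measurable_fun (fun r => complex.Im c * w r)); last exact: measurable_funM.
  by move=> r _; rewrite Im_Zp_ind_pdigits.
- set k := complex.Re c ^+ 2 + complex.Im c ^+ 2.
  have /integrableP[_ kw_fin] :=
    integrableZl_EFin (@measurable_I01 R) k integrable_indic_pdigits.
  apply: le_lt_trans kw_fin; rewrite le_eqVlt; apply/predU1P; left.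
  apply: eq_integral => r _ /=.
  rewrite normc_sqr Re_Zp_ind_pdigits Im_Zp_ind_pdigits ger0_norm; last first.
    by rewrite mulr_ge0 ?addr_ge0 ?sqr_ge0 //; case/andP: (indic01 (pdigits p @^-1` K) r).
  by congr EFin; rewrite /k indicE; case: (_ \in _) => /=; ring.
Qed.

Lemma normc_Zp_ip_indE (g : Zpad p -> R[i]) : Zp_L2 g ->
  ComplexField.Normc.normc (Zp_ip e g) ^+ 2 =
  (complex.Re c ^+ 2 + complex.Im c ^+ 2) *
  ((\int[mu]_(r in D) (w r * complex.Re (g (pdigits p r)))) ^+ 2 +
   (\int[mu]_(r in D) (w r * complex.Im (g (pdigits p r)))) ^+ 2).
Proof.
move=> /Zp_L2_Re_Im[mRe mIm finRe finIm].
have mD := @measurable_I01 R.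
have iRe := integrable_weightM mD measurable_indic_pdigits (indic01 _)
  (integrable_of_sqr mD (lebesgue_measure_I01_lt_pinfty R) mRe finRe).
have iIm := integrable_weightM mD measurable_indic_pdigits (indic01 _)
  (integrable_of_sqr mD (lebesgue_measure_I01_lt_pinfty R) mIm finIm).
rewrite normc_sqr Zp_ip_indE /=.
under eq_Rintegral do rewrite mulrDr (mulrCA (w _)) (mulrCA (w _) (complex.Im c)).
under [X in _ + X ^+ 2]eq_Rintegral
  do rewrite mulrBr (mulrCA (w _)) (mulrCA (w _) (complex.Re c)).
rewrite RintegralD ?RintegralB ?RintegralZl //; first by ring.
all: exact: integrableZl_EFin.
Qed.

Hypothesis normK : Zp_norm2 e = 1.

Lemma Zp_ind_normalization :
  (complex.Re c ^+ 2 + complex.Im c ^+ 2) * \int[mu]_(r in D) w r = 1.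
Proof.
rewrite -[RHS](sqrtr_eq1 normK) Zp_ip_indE /= -RintegralZl //; last first.
- exact: integrable_indic_pdigits.
- exact: measurable_I01.
apply: eq_Rintegral => r _; rewrite Re_Zp_ind_pdigits Im_Zp_ind_pdigits indicE.
by case: (_ \in _) => /=; ring.
Qed.

Lemma normc_Zp_ip_ind_le (g : Zpad p -> R[i]) : Zp_L2 g ->
  ComplexField.Normc.normc (Zp_ip e g) ^+ 2 <=
  \int[mu]_(r in D) (w r * (complex.Re (g (pdigits p r)) ^+ 2 +
                            complex.Im (g (pdigits p r)) ^+ 2)).
Proof.
move=> L2g; rewrite normc_Zp_ip_indE //.
have [mRe mIm finRe finIm] := Zp_L2_Re_Im L2g.
have mD := @measurable_I01 R.
have mw := measurable_indic_pdigits.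
have L_gt0 : 0 < \int[mu]_(r in D) w r.
  have L_ge0 : 0 <= \int[mu]_(r in D) w r.
    by apply: Rintegral_ge0 => r _; have /andP[] := indic01 (R := R) (pdigits p @^-1` K) r.
  rewrite lt_neqAle L_ge0 andbT; apply/eqP => L0; have := Zp_ind_normalization.
  by rewrite -L0 mulr0 => /eqP; rewrite eq_sym oner_eq0.
rewrite -[X in _ <= X]mul1r -Zp_ind_normalization -mulrA ler_wpM2l ?addr_ge0 ?sqr_ge0 //.
under [X in _ <= _ * X]eq_Rintegral do rewrite mulrDr.
rewrite RintegralD ?mulrDr //; last 2 first.
- exact: (integrable_weightM mD mw (indic01 _) (integrable_sqr mRe finRe)).
- exact: (integrable_weightM mD mw (indic01 _) (integrable_sqr mIm finIm)).
have CS := weighted_Cauchy_Schwarz mD (lebesgue_measure_I01_lt_pinfty R) mw (indic01 _).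
by apply: lerD; [exact: (CS _ mRe finRe L_gt0) | exact: (CS _ mIm finIm L_gt0)].
Qed.

End Zp_indicator_vector.

Lemma sum_indic_disjoint_le1 {R : numDomainType} {T : Type} {J : finType}
    (K : J -> set T) : (forall j k, j != k -> K j `&` K k = set0) ->
  forall x, \sum_(j : J) (\1_(K j) x : R) <= 1.
Proof.
move=> disjK x; have [[j Kjx]|noK] := pselect (exists j, K j x); last first.
  by rewrite big1 ?ler01 // => j _; rewrite indicE memNset // => Kjx; apply: noK; exists j.
rewrite (bigD1 j) //= big1 ?addr0; first by rewrite indicE mem_set.
move=> k kj; rewrite indicE memNset // => Kkx.
by have /seteqP[/(_ x (conj Kkx Kjx))] := disjK _ _ kj.
Qed.

Section Zp_Bessel_inequality.
Variables (R : realType) (p : nat) (J : finType) (K : J -> set (Zpad p)) (c : J -> R[i]).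
Hypotheses (p_gt0 : (0 < p)%N) (oK : forall j, open (K j)).
Hypothesis disjK : forall j k, j != k -> K j `&` K k = set0.
Hypothesis normK : forall j, Zp_norm2 (fun x => c j * Zp_ind R (K j) x) = 1.

Lemma Zp_Bessel_ind (g : Zpad p -> R[i]) : Zp_L2 g ->
  \sum_(j : J) ComplexField.Normc.normc (Zp_ip (fun x => c j * Zp_ind R (K j) x) g) ^+ 2
    <= complex.Re (Zp_ip g g).
Proof.
move=> L2g; have [mRe mIm finRe finIm] := Zp_L2_Re_Im L2g.
have mD := @measurable_I01 R.
have ih := integrableD_EFin mD (integrable_sqr mRe finRe) (integrable_sqr mIm finIm).
have iwh j := integrable_weightM mD (measurable_indic_pdigits p_gt0 (oK j)) (indic01 _) ih.
apply: le_trans (ler_sum _ (fun j _ => normc_Zp_ip_ind_le p_gt0 (oK j) (normK j) L2g)) _.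
rewrite -Rintegral_sum // Re_Zp_ip_self.
apply: le_Rintegral => //; first exact: integrable_sum_EFin.
move=> r _; rewrite -mulr_suml ler_piMl ?addr_ge0 ?sqr_ge0 //.
exact: (sum_indic_disjoint_le1 (R := R) disjK (pdigits p r)).
Qed.

End Zp_Bessel_inequality.

Lemma sum_option (V : nmodType) (J : finType) (F : option J -> V) :
  \sum_(s : option J) F s = F None + \sum_(j : J) F (Some j).
Proof.
rewrite (perm_big (None :: map Some (index_enum J))) /=; last first.
  apply: uniq_perm; first exact: index_enum_uniq.
    by rewrite /= map_inj_uniq ?index_enum_uniq // andbT; apply/mapP => -[].
  by case=> [j|]; rewrite mem_index_enum /= ?inE ?(mem_map Some_inj) ?mem_index_enum.
by rewrite big_cons big_map.
Qed.

Lemma transition_matrix_ext_infty (R : realType) (J : finType) (pi : R -> J -> J -> R) :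
  (forall t s r, 0 <= t -> 0 <= pi t s r) ->
  (forall t r, 0 <= t -> \sum_(s : J) pi t s r <= 1) ->
  transition_matrix (ext_infty pi).
Proof.
move=> pi_ge0 pi_sub t t_ge0; split; last first.
  by case=> [r|]; rewrite sum_option /= ?subrK // big1 ?addr0.
have col_ge0 r : 0 <= \sum_(s : J) pi t s r by apply: sumr_ge0 => s _; exact: pi_ge0.
case=> [s|] [r|] /=; rewrite ?lexx ?ler01 //.
- rewrite pi_ge0 //=; apply: le_trans (pi_sub t r t_ge0).
  by rewrite (bigD1 s) //= lerDl sumr_ge0 // => j _; exact: pi_ge0.
- by rewrite subr_ge0 pi_sub //= lerBlDr lerDl col_ge0.
Qed.

Unset Implicit Arguments.

Theorem theorem2 (R : realType) (p : nat) (hp : prime p)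
    (H : (Zpad p -> R[i]) -> (Zpad p -> R[i]))
    (U : R -> (Zpad p -> R[i]) -> (Zpad p -> R[i]))
    (J : finType) (N : set (Zpad p)) (K : J -> set (Zpad p)) (c : J -> R[i]) :
  selfadjoint_on_test H ->
  is_exp_group H U ->
  Zp_null R N ->
  (forall j, open (K j) /\ compact (K j)) ->
  (forall j k, j != k -> K j `&` K k = set0) ->
  ~` N = \bigcup_(j in [set: J]) K j ->
  (forall v, Zp_norm2 (fun x => c v * Zp_ind R (K v) x) = 1) ->
  transition_matrix
    (ext_infty (fun (t : R) (r v : J) =>
       ComplexField.Normc.normc (Zp_ip (fun x => c r * Zp_ind R (K r) x)
                    (U t (fun x => c v * Zp_ind R (K v) x))) ^+ 2)).
Proof.
move=> _ [[U_L2 _ _ U_ip _] _] _ KJ disjK _ normK.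
have p_gt0 := prime_gt0 hp.
have oK j : open (K j) by case: (KJ j).
have L2e j := Zp_L2_ind (c j) p_gt0 (oK j).
apply: transition_matrix_ext_infty => [t s r _|t v _]; first exact: sqr_ge0.
apply: le_trans (Zp_Bessel_ind p_gt0 oK disjK normK (U_L2 t _ (L2e v))) _.
by rewrite U_ip // (sqrtr_eq1 (normK v)).
Qed.
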